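(* Let $p,q,r$ be pairwise distinct primes with $p<q$ and $p<r$, and let $n$ be an integer with $1\le n<pqr$. For a finite sequence $(t_1,\dots,t_l)$ and $d\in\{0,1,2\}$ let $N_d(t_1,\dots,t_l)$ be the number of indices $i$ with $t_i=d$. Put $S_+=(F_n,F_{n-p-q},F_{n-q-r},F_{n-r-p})$ and $S_-=(F_{n-p},F_{n-q},F_{n-r},F_{n-p-q-r})$. Then $$a_{pqr}(n)-a_{pqr}(n-1)=\tfrac12\big(N_1(S_-)-N_1(S_+)\big)=N_0(S_+)-N_0(S_-)=N_2(S_+)-N_2(S_-).$$
   Context: $\Phi_{pqr}(x)=\prod_{0<k<pqr,\ \gcd(k,pqr)=1}(x-\zeta^k)$, $\zeta$ a primitive $pqr$-th root of unity, with coefficients $a_{pqr}(n)$ (zero outside $[0,\deg\Phi_{pqr}]$). For each integer $k$, let $a_k,b_k,c_k$ be the unique integers with $0\le a_k<p$, $0\le b_k<q$, $0\le c_k<r$ and $k\equiv a_kqr+b_krp+c_kpq \pmod{pqr}$, and define $F_k=\frac{a_k}{p}+\frac{b_k}{q}+\frac{c_k}{r}-\frac{k}{pqr}$. *)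

From HB Require Import structures.
From mathcomp Require Import all_boot all_order all_algebra all_field.
Unset Strict Implicit. Unset Printing Implicit Defensive.
Import Order.TTheory GRing.Theory Num.Theory.
Local Open Scope ring_scope.

Definition acoef (p q r : nat) (n : nat) : int := ('Phi_(muln (muln p q) r))`_n.

(* The triple (a_k, b_k, c_k) with 0<=a_k<p, 0<=b_k<q, 0<=c_k<r and
   k = a_k qr + b_k rp + c_k pq (mod pqr).  Defined by picking the
   (unique, under the paper's hypotheses) such triple. *)
Definition abc_pred (p q r : nat) (k : int) (t : 'I_p * 'I_q * 'I_r) : bool :=
  let a := nat_of_ord t.1.1 in let b := nat_of_ord t.1.2 in
  let c := nat_of_ord t.2 in
  (Posz (muln (muln p q) r) %| k
     - Posz (addn (addn (muln a (muln q r)) (muln b (muln r p))) (muln c (muln p q))))%Z.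

Definition abc (p q r : nat) (k : int) := [pick t | abc_pred p q r k t].

Definition F (p q r : nat) (k : int) : rat :=
  match abc p q r k with
  | Some (a, b, c) =>
      (nat_of_ord a)%:R / p%:R + (nat_of_ord b)%:R / q%:R
      + (nat_of_ord c)%:R / r%:R - k%:~R / (muln (muln p q) r)%:R
  | None => 0
  end.

Definition Ncount (d : nat) (s : seq rat) : nat := count (pred1 (d%:R)) s.

From HB Require Import structures.
From mathcomp Require Import all_boot all_order all_algebra all_field.
From mathcomp Require Import ring lra zify.
From Stdlib Require Import FunctionalExtensionality.
Import Order.TTheory GRing.Theory Num.Theory.
Local Open Scope ring_scope.
Set Implicit Arguments.
Unset Strict Implicit.

(* Write N = pqr and let Z(X) = sum of X^(a qr + b rp + c pq) over 0 <= a < p,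
   0 <= b < q, 0 <= c < r.  The proof rests on two facts.
   (1) A polynomial identity.  Factoring X^m - 1 into cyclotomic polynomials
       gives (1-X) Phi_N (1-X^pq)(1-X^qr)(1-X^rp) = (1-X^N)(1-X^p)(1-X^q)(1-X^r),
       and summing three geometric series gives Z (1-X^pq)(1-X^qr)(1-X^rp)
       = (1-X^N)^3; hence (1-X^N)^2 (1-X) Phi_N = (1-X^p)(1-X^q)(1-X^r) Z.
       Comparing coefficients of X^n for n < N, and reading a coefficient
       sequence as a function on the integers (zero at negative indices),
       a(n) - a(n-1) is the triple backward difference, with steps p, q, r,
       of the coefficient sequence of Z, evaluated at n.
   (2) Arithmetic of the digits (a_k, b_k, c_k).  They exist and are unique,
       a_k depends only on k mod p (and similarly for b_k, c_k), and
       F_k = (a_k qr + b_k rp + c_k pq - k)/N is an integer.  Hence the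
       coefficient of X^k in Z is 1 exactly when F_k = 0, F_k lies in {0,1,2}
       for -(p+q+r) < k < N, and the triple difference of F vanishes, because
       each digit term is periodic in one of the steps and k/N is affine.
   The triple difference at n is (sum over S_+) - (sum over S_-); so (1) gives
   the N_0 formula, and (2) says that S_+ and S_- are two lists of four values
   in {0,1,2} with the same sum, which turns the N_0 formula into the N_1 and
   N_2 ones. *)

Section Differences.
Context {R : zmodType}.
Implicit Types (f g : int -> R) (s t u x : int).

Definition bdiff s f : int -> R := fun x => f x - f (x - s).

Lemma bdiffC s t f : bdiff s (bdiff t f) = bdiff t (bdiff s f).
Proof.
apply: functional_extensionality => x; rewrite /bdiff [x - s - t]addrAC !opprB.
by rewrite addrACA [RHS]addrACA [- f (x - s) + _]addrC.
Qed.

Lemma bdiffD s f g : bdiff s (fun x => f x + g x) = fun x => bdiff s f x + bdiff s g x.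
Proof. by apply: functional_extensionality => x; rewrite /bdiff opprD addrACA. Qed.

Lemma bdiffN s f : bdiff s (fun x => - f x) = fun x => - bdiff s f x.
Proof. by apply: functional_extensionality => x; rewrite /bdiff opprB opprK addrC. Qed.

Lemma bdiff_periodic s f : (forall x, f (x - s) = f x) -> bdiff s f = fun _ => 0.
Proof. by move=> fP; apply: functional_extensionality => x; rewrite /bdiff fP subrr. Qed.

Lemma bdiff_const s (c : R) : bdiff s (fun _ => c) = fun _ => 0.
Proof. exact: bdiff_periodic. Qed.

Lemma bdiff_linear s (c : R) : bdiff s (fun x => c *~ x) = fun _ => c *~ s.
Proof. by apply: functional_extensionality => x; rewrite /bdiff -mulrzBr opprB addrC subrK. Qed.

Lemma bdiff_vanish s f : 0 <= s -> (forall x, x < 0 -> f x = 0) ->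
  forall x, x < 0 -> bdiff s f x = 0.
Proof. by move=> s_ge0 f0 x x_lt0; rewrite /bdiff !f0 ?subrr //; lia. Qed.

Lemma bdiff_small s f x : (forall y, y < 0 -> f y = 0) -> x < s -> bdiff s f x = f x.
Proof. by move=> f0 x_lt; rewrite /bdiff (f0 (x - s)) ?subr0 //; lia. Qed.

Definition bdiff3 s t u f : int -> R := bdiff s (bdiff t (bdiff u f)).

Lemma bdiff3_rot s t u f : bdiff3 s t u f = bdiff3 t u s f.
Proof. by rewrite /bdiff3 bdiffC [bdiff s (bdiff u f)]bdiffC. Qed.

Lemma bdiff3D s t u f g :
  bdiff3 s t u (fun x => f x + g x) = fun x => bdiff3 s t u f x + bdiff3 s t u g x.
Proof. by rewrite /bdiff3 !bdiffD. Qed.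

Lemma bdiff3N s t u f : bdiff3 s t u (fun x => - f x) = fun x => - bdiff3 s t u f x.
Proof. by rewrite /bdiff3 !bdiffN. Qed.

Lemma bdiff3_periodic s t u f : (forall x, f (x - u) = f x) -> bdiff3 s t u f = fun _ => 0.
Proof. by move=> fP; rewrite /bdiff3 [bdiff u f]bdiff_periodic // !bdiff_const. Qed.

Lemma bdiff3_linear s t u (c : R) : bdiff3 s t u (fun x => c *~ x) = fun _ => 0.
Proof. by rewrite /bdiff3 bdiff_linear !bdiff_const. Qed.

(* bdiff3 s t u f x is the sum of f over plus_args minus the sum over
   minus_args; for the theorem these are the arguments of S_+ and S_-. *)
Definition plus_args s t u x : seq int := [:: x; x - s - t; x - t - u; x - u - s].
Definition minus_args s t u x : seq int := [:: x - s; x - t; x - u; x - s - t - u].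

Lemma bdiff3_expand s t u f x :
  bdiff3 s t u f x = \sum_(y <- plus_args s t u x) f y - \sum_(y <- minus_args s t u x) f y.
Proof.
rewrite /bdiff3 /bdiff !big_cons !big_nil !addr0 [x - s - u]addrAC !opprB !opprD !addrA.
by rewrite [LHS](ACl (1*5*3*7*8*4*2*6))%AC.
Qed.

End Differences.

Section IntCoefficients.
Context {R : nzRingType}.

Definition coefz (P : {poly R}) (m : int) : R := if m is Posz i then P`_i else 0.

Lemma coefz_neg P m : m < 0 -> coefz P m = 0.
Proof. by case: m. Qed.

Lemma coefz_mul1subXn s P : coefz ((1 - 'X^s) * P) = bdiff s%:Z (coefz P).
Proof.
apply: functional_extensionality => m; rewrite /bdiff.
case: m => [i|i]; last by rewrite !coefz_neg ?subr0 //; lia.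
rewrite /= mulrBl mul1r coefB coefXnM; case: ltnP => [lt_is|le_si].
  by rewrite coefz_neg ?subr0 //; lia.
by rewrite subzn.
Qed.

End IntCoefficients.

Lemma divisors_mul_prime m s : (0 < m)%N -> prime s -> ~~ (s %| m)%N ->
  perm_eq (divisors (m * s)) (divisors m ++ [seq (d * s)%N | d <- divisors m]).
Proof.
move=> m_gt0 s_pr s_ndvd_m; have s_gt0 := prime_gt0 s_pr.
have ms_gt0 : (0 < m * s)%N by rewrite muln_gt0 m_gt0.
apply: uniq_perm; first exact: divisors_uniq.
  rewrite cat_uniq divisors_uniq map_inj_uniq ?divisors_uniq ?andbT; last first.
    by move=> x y /eqP; rewrite eqn_pmul2r // => /eqP.
  apply/hasPn => _ /mapP [d _ ->]; rewrite /= -dvdn_divisors //.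
  by apply: contra s_ndvd_m; apply: dvdn_trans; apply: dvdn_mull.
move=> x; rewrite mem_cat -!dvdn_divisors //; apply/idP/orP => [x_dvd|[|/mapP [d]]].
- have [s_dvd_x | s_ndvd_x] := boolP (s %| x)%N.
    right; apply/mapP; exists (x %/ s)%N; last by rewrite divnK.
    by rewrite -dvdn_divisors // -(dvdn_pmul2r s_gt0) divnK.
  by left; rewrite -(@Gauss_dvdl x m s) // coprime_sym prime_coprime.
- exact: dvdn_mulr.
- by rewrite -dvdn_divisors // => d_dvd ->; rewrite dvdn_pmul2r.
Qed.

Section DivisorProducts.
Context {R : Type} {idx : R} {op : Monoid.com_law idx}.
Local Notation "\prod_ ( d <- r ) F" := (\big[op/idx]_(d <- r) F).

Lemma big_divisors_mul_prime (g : nat -> R) m s :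
  (0 < m)%N -> prime s -> ~~ (s %| m)%N ->
  \prod_(d <- divisors (m * s)) g d = \prod_(d <- divisors m) op (g d) (g (d * s)%N).
Proof.
move=> m_gt0 s_pr s_ndvd_m.
by rewrite (perm_big _ (divisors_mul_prime m_gt0 s_pr s_ndvd_m)) big_cat big_map big_split.
Qed.

Lemma big_divisors_prime (g : nat -> R) s : prime s ->
  \prod_(d <- divisors s) g d = op (g 1%N) (g s).
Proof.
move=> s_pr; rewrite -[s]mul1n big_divisors_mul_prime // ?dvdn1 ?prime1 //; last first.
  by apply: contraL s_pr => /eqP ->.
by rewrite big_seq1 mul1n.
Qed.

Lemma big_divisors_prime2 (g : nat -> R) s t :
  prime s -> prime t -> s != t ->
  \prod_(d <- divisors (s * t)) g d = op (op (g 1%N) (g t)) (op (g s) (g (s * t)%N)).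
Proof.
move=> s_pr t_pr neq_st.
rewrite big_divisors_mul_prime ?prime_gt0 ?dvdn_prime2 1?eq_sym //.
by rewrite big_divisors_prime // mul1n.
Qed.

End DivisorProducts.

Lemma X_sub1 : 'X - 1 = 'Phi_1 :> {poly int}.
Proof. by rewrite -['X]expr1 -prod_Cyclotomic // big_seq1. Qed.

Lemma Xn_sub1_prime s : prime s -> 'X^s - 1 = 'Phi_1 * 'Phi_s.
Proof. by move=> s_pr; rewrite -prod_Cyclotomic ?prime_gt0 // big_divisors_prime. Qed.

Lemma Xn_sub1_prime2 s t : prime s -> prime t -> s != t ->
  'X^(s * t) - 1 = 'Phi_1 * 'Phi_t * ('Phi_s * 'Phi_(s * t)) :> {poly int}.
Proof.
by move=> s_pr t_pr neq_st; rewrite -prod_Cyclotomic ?muln_gt0 ?prime_gt0 // big_divisors_prime2.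
Qed.

Lemma Xn_sub1_prime3 p q r : prime p -> prime q -> prime r ->
    p != q -> q != r -> r != p ->
  'X^(p * q * r) - 1 = 'Phi_1 * 'Phi_r * ('Phi_q * 'Phi_(q * r))
     * ('Phi_p * 'Phi_(r * p) * ('Phi_(p * q) * 'Phi_(p * q * r))) :> {poly int}.
Proof.
move=> p_pr q_pr r_pr neq_pq neq_qr neq_rp.
have r_ndvd_pq : ~~ (r %| p * q)%N.
  by rewrite Euclid_dvdM // !dvdn_prime2 // negb_or neq_rp eq_sym neq_qr.
rewrite -prod_Cyclotomic ?muln_gt0 ?prime_gt0 // big_divisors_mul_prime ?muln_gt0 ?prime_gt0 //.
by rewrite big_divisors_prime2 // !mul1n [(p * r)%N]mulnC.
Qed.

(* Both sides are products of the same cyclotomic polynomials. *)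
Lemma cyclotomic_identity p q r : prime p -> prime q -> prime r ->
    p != q -> q != r -> r != p ->
  (1 - 'X) * 'Phi_(p * q * r) * ((1 - 'X^(p * q)) * (1 - 'X^(q * r)) * (1 - 'X^(r * p)))
  = (1 - 'X^(p * q * r)) * ((1 - 'X^p) * (1 - 'X^q) * (1 - 'X^r)) :> {poly int}.
Proof.
move=> p_pr q_pr r_pr neq_pq neq_qr neq_rp.
rewrite -!(opprB _ 1) Xn_sub1_prime3 // (Xn_sub1_prime2 p_pr q_pr neq_pq).
rewrite (Xn_sub1_prime2 q_pr r_pr neq_qr) (Xn_sub1_prime2 r_pr p_pr neq_rp).
by rewrite !Xn_sub1_prime // X_sub1; ring.
Qed.

Lemma residue_digit_eq (s u x x' : nat) (k k' : int) : coprime s u ->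
  (x < s)%N -> (x' < s)%N ->
  (s %| k - (x * u)%N%:Z)%Z -> (s %| k' - (x' * u)%N%:Z)%Z -> (s %| k - k')%Z -> x = x'.
Proof.
move=> co_su lt_xs lt_x's dvd_k dvd_k' dvd_kk'.
have : (s %| (x%:Z - x'%:Z) * u)%Z.
  have -> : (x%:Z - x'%:Z) * u = (k - k') - (k - (x * u)%N%:Z) + (k' - (x' * u)%N%:Z).
    by rewrite !PoszM; ring.
  by rewrite rpredD // rpredB.
rewrite Gauss_dvdzl ?coprimezE // => /dvdzP [c].
have : (c <= -1) \/ (c = 0) \/ (1 <= c) by lia.
by clear -lt_xs lt_x's; nia.
Qed.

Lemma coprime_prime_mul s t u : prime s -> prime t -> prime u -> s != t -> s != u ->
  coprime s (t * u).
Proof.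
move=> s_pr t_pr u_pr neq_st neq_su.
by rewrite coprimeMr !prime_coprime // !dvdn_prime2 // neq_st neq_su.
Qed.

Lemma dvdz_residue (s M x y : nat) (k : int) :
  (M %| k - (x + y)%N%:Z)%Z -> (s %| M)%N -> (s %| y)%N -> (s %| k - x%:Z)%Z.
Proof.
move=> dvd_M dvd_sM dvd_sy; have -> : k - x%:Z = (k - (x + y)%N%:Z) + y%:Z by rewrite PoszD; ring.
by rewrite rpredD ?dvdz_nat // (dvdz_trans _ dvd_M) ?dvdz_nat.
Qed.

Lemma geometric_sum (R : pzRingType) (x : R) n :
  (1 - x) * \sum_(i < n) x ^+ i = 1 - x ^+ n.
Proof. by rewrite -opprB mulNr -subrX1 opprB. Qed.

Lemma excess_bounds (M A B C QR RP PQ S : nat) (m k : int) :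
  (A + QR <= M)%N -> (B + RP <= M)%N -> (C + PQ <= M)%N -> (S <= QR + RP + PQ)%N ->
  - S%:Z < k -> k < M%:Z -> k - (A + B + C)%N%:Z = m * M%:Z -> -2 <= m <= 0.
Proof.
move=> *; have : (m <= -3) \/ (-2 <= m <= 0) \/ (1 <= m) by lia.
nia.
Qed.

Section ThreePrimes.
Variables p q r : nat.
Hypotheses (p_pr : prime p) (q_pr : prime q) (r_pr : prime r)
  (neq_pq : p != q) (neq_qr : q != r) (neq_rp : r != p).
Local Notation N := (p * q * r)%N.
Local Notation triple := ('I_p * 'I_q * 'I_r)%type.

Definition lincomb (t : triple) : nat := t.1.1 * (q * r) + t.1.2 * (r * p) + t.2 * (p * q).

Lemma abc_predE k t : abc_pred p q r k t = (N %| k - (lincomb t)%:Z)%Z.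
Proof. by []. Qed.

Lemma N_gt0 : (0 < N)%N.
Proof. by rewrite !muln_gt0 !prime_gt0. Qed.

Lemma abc_pred_residues k t : abc_pred p q r k t ->
  [/\ (p %| k - (t.1.1 * (q * r))%N%:Z)%Z, (q %| k - (t.1.2 * (r * p))%N%:Z)%Z
    & (r %| k - (t.2 * (p * q))%N%:Z)%Z].
Proof.
rewrite abc_predE /lincomb => dvd_N; split.
- apply: (@dvdz_residue _ N _ (t.1.2 * (r * p) + t.2 * (p * q))).
    by rewrite addnA.
  by rewrite -mulnA dvdn_mulr.
  exact: (dvdn_add (dvdn_mull _ (dvdn_mull _ (dvdnn p))) (dvdn_mull _ (dvdn_mulr _ (dvdnn p)))).
- apply: (@dvdz_residue _ N _ (t.1.1 * (q * r) + t.2 * (p * q))).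
    by rewrite addnA [(t.1.2 * _ + _)%N]addnC.
  by rewrite mulnAC dvdn_mull.
  exact: (dvdn_add (dvdn_mull _ (dvdn_mulr _ (dvdnn q))) (dvdn_mull _ (dvdn_mull _ (dvdnn q)))).
- apply: (@dvdz_residue _ N _ (t.1.1 * (q * r) + t.1.2 * (r * p))).
    by rewrite addnC.
  by rewrite dvdn_mull.
  exact: (dvdn_add (dvdn_mull _ (dvdn_mull _ (dvdnn r))) (dvdn_mull _ (dvdn_mulr _ (dvdnn r)))).
Qed.

Lemma abc_pred_coord k k' t t' : abc_pred p q r k t -> abc_pred p q r k' t' -> [/\
  ((p %| k - k')%Z -> t.1.1 = t'.1.1 :> nat),
  ((q %| k - k')%Z -> t.1.2 = t'.1.2 :> nat) &
  ((r %| k - k')%Z -> t.2 = t'.2 :> nat)].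
Proof.
move=> /abc_pred_residues [rp rq rr] /abc_pred_residues [rp' rq' rr'].
split=> dvd_kk'.
- by apply: (residue_digit_eq _ _ _ rp rp' dvd_kk'); rewrite // coprime_prime_mul // eq_sym.
- by apply: (residue_digit_eq _ _ _ rq rq' dvd_kk'); rewrite // coprime_prime_mul // eq_sym.
- by apply: (residue_digit_eq _ _ _ rr rr' dvd_kk'); rewrite // coprime_prime_mul // eq_sym.
Qed.

Lemma abc_pred_uniq k t t' : abc_pred p q r k t -> abc_pred p q r k t' -> t = t'.
Proof.
move=> /abc_pred_coord /[apply]; rewrite subrr.
case: t t' => [[a b] c] [[a' b'] c'] /= [ea eb ec].
by rewrite (val_inj (ea (dvdz0 _))) (val_inj (eb (dvdz0 _))) (val_inj (ec (dvdz0 _))).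
Qed.

Lemma abc_pred_lincomb t : abc_pred p q r (lincomb t) t.
Proof. by rewrite abc_predE subrr dvdz0. Qed.

Lemma lincomb_inj : injective lincomb.
Proof.
move=> t t' eq_tt'; apply: (@abc_pred_uniq (lincomb t)) => //; first exact: abc_pred_lincomb.
rewrite eq_tt'; exact: abc_pred_lincomb.
Qed.

(* Existence: t |-> lincomb t mod N is injective between sets of size N. *)
Lemma abc_pred_exists k : exists t, abc_pred p q r k t.
Proof.
pose res (t : triple) : 'I_N := Ordinal (ltn_pmod (lincomb t) N_gt0).
have res_inj : injective res.
  move=> t t' /(congr1 val) /= /eqP; rewrite -eqz_nat -!modz_nat eqz_mod_dvd => dvd_N.
  by apply: (@abc_pred_uniq (lincomb t)); [exact: abc_pred_lincomb | rewrite abc_predE].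
have kN_ge0 : 0 <= (k %% N)%Z by apply: modz_ge0; rewrite eqz_nat -lt0n N_gt0.
have kN_lt : (`|(k %% N)%Z| < N)%N.
  by rewrite -ltz_nat gez0_abs // ltz_pmod // ltz_nat N_gt0.
have /codomP [t /(congr1 val) /= Et] : Ordinal kN_lt \in codom res.
  by apply: inj_card_onto => //; rewrite !card_prod !card_ord.
exists t; rewrite abc_predE -eqz_mod_dvd.
by rewrite -[(k %% N)%Z]gez0_abs // Et modz_nat.
Qed.

Lemma abc_pick k t : abc_pred p q r k t -> abc p q r k = Some t.
Proof.
move=> Ht; rewrite /abc; case: pickP => [t' Ht' | none]; first by rewrite (abc_pred_uniq Ht' Ht).
by move: (none t); rewrite Ht.
Qed.

Lemma F_lincomb k t : abc_pred p q r k t -> F p q r k = ((lincomb t)%:R - k%:~R) / N%:R.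
Proof.
move=> Ht; rewrite /F (abc_pick Ht) /lincomb; case: t {Ht} => [[a b] c] /=.
have prime_neq0 s : prime s -> s%:R != 0 :> rat by rewrite pnatr_eq0 -lt0n => /prime_gt0.
by rewrite !natrD !natrM; field; rewrite !prime_neq0.
Qed.

Lemma F_eq0 k : (F p q r k == 0) = [exists t, (lincomb t)%:Z == k].
Proof.
have [t Ht] := abc_pred_exists k.
rewrite (F_lincomb Ht) mulf_eq0 invr_eq0 pnatr_eq0 eqn0Ngt N_gt0 orbF subr_eq0 pmulrn eqr_int.
apply/idP/existsP => [|[t' /eqP Et']]; first by exists t.
suff <- : t' = t by rewrite Et'.
by apply: (abc_pred_uniq _ Ht); rewrite -Et' abc_pred_lincomb.
Qed.

Lemma F_range k : - (p + q + r)%N%:Z < k -> k < N%:Z -> F p q r k \in [:: 0; 1; 2].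
Proof.
move=> k_gt k_lt; have [t Ht] := abc_pred_exists k.
have [m Em] := dvdzP Ht; rewrite (F_lincomb Ht).
have -> : ((lincomb t)%:R - k%:~R) / N%:R = (- m)%:~R :> rat.
  rewrite [(lincomb t)%:R]pmulrn -intrB -opprB Em -mulNr intrM pmulrn mulfK //.
  by rewrite pnatr_eq0 -lt0n N_gt0.
have digit_bound (s u x : nat) : (x < s)%N -> (s * u)%N = N -> (x * u + u <= N)%N.
  by move=> lt_xs <-; rewrite addnC -mulSn leq_mul2r lt_xs orbT.
have sum_bound : (p + q + r <= q * r + r * p + p * q)%N.
  by have := prime_gt0 p_pr; have := prime_gt0 q_pr; have := prime_gt0 r_pr; nia.
have m_bounds : -2 <= m <= 0.
  apply: (excess_bounds (digit_bound _ _ _ (ltn_ord t.1.1) (mulnA p q r))) k_gt k_lt Em.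
  - by apply: digit_bound; rewrite // mulnA mulnC mulnA.
  - by apply: digit_bound; rewrite // mulnC.
  - exact: sum_bound.
have : (m = 0) \/ (m = -1) \/ (m = -2) by lia.
by case=> [|[|]] ->.
Qed.

(* F splits as a_k/p + b_k/q + c_k/r minus the affine function k/N; each
   digit part is periodic in its prime, so the triple difference of F is 0. *)
Definition digit_frac (sel : triple -> nat) (s : nat) (k : int) : rat :=
  if abc p q r k is Some t then (sel t)%:R / s%:R else 0.

Lemma F_split k : F p q r k = digit_frac (fun t => t.1.1) p k
  + digit_frac (fun t => t.1.2) q k + digit_frac (fun t => t.2) r k - (N%:R)^-1 *~ k.
Proof.
have [[[a b] c] Ht] := abc_pred_exists k.
by rewrite /F /digit_frac (abc_pick Ht) -[in RHS]mulrzl.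
Qed.

Lemma digit_frac_periodic (sel : triple -> nat) (s : nat) :
  (forall k k' t t', abc_pred p q r k t -> abc_pred p q r k' t' -> (s %| k - k')%Z ->
     sel t = sel t') ->
  forall k, digit_frac sel s (k - s%:Z) = digit_frac sel s k.
Proof.
move=> sel_res k; have [t Ht] := abc_pred_exists k.
have [t' Ht'] := abc_pred_exists (k - s%:Z).
rewrite /digit_frac (abc_pick Ht) (abc_pick Ht') (sel_res _ _ _ _ Ht' Ht) //.
by rewrite addrAC subrr sub0r rpredN dvdzz.
Qed.

Lemma bdiff3_F x : bdiff3 p q r (F p q r) x = 0.
Proof.
have per_p : forall k, digit_frac (fun t => t.1.1) p (k - p%:Z) = digit_frac (fun t => t.1.1) p k.
  by apply: digit_frac_periodic => k k' t t' /abc_pred_coord /[apply] [[]].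
have per_q : forall k, digit_frac (fun t => t.1.2) q (k - q%:Z) = digit_frac (fun t => t.1.2) q k.
  by apply: digit_frac_periodic => k k' t t' /abc_pred_coord /[apply] [[_]].
have per_r : forall k, digit_frac (fun t => t.2) r (k - r%:Z) = digit_frac (fun t => t.2) r k.
  by apply: digit_frac_periodic => k k' t t' /abc_pred_coord /[apply] [[_ _]].
rewrite (functional_extensionality _ _ F_split) !bdiff3D bdiff3N bdiff3_linear.
rewrite (bdiff3_periodic _ _ per_r) bdiff3_rot (bdiff3_periodic _ _ per_p).
by rewrite 2!bdiff3_rot (bdiff3_periodic _ _ per_q) oppr0 !addr0.
Qed.

Definition Zpoly : {poly int} := \sum_(t : triple) 'X^(lincomb t).

(* Since lincomb is injective, the coefficient of X^m in Z is 1 if m is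
   represented and 0 otherwise. *)
Lemma coef_Zpoly m : Zpoly`_m = [exists t, lincomb t == m]%:R.
Proof.
rewrite /Zpoly coef_sum; under eq_bigr do rewrite coefXn.
case: existsP => [[t0 /eqP <-] | none]; last first.
  by apply: big1 => t _; case: eqP => // Et; case: none; exists t; rewrite Et.
rewrite (bigD1 t0) //= eqxx big1 ?addr0 // => t /negbTE neq_tt0.
by case: eqP => // /lincomb_inj Et; rewrite Et eqxx in neq_tt0.
Qed.

Lemma coefz_Zpoly : coefz Zpoly = fun k => (F p q r k == 0)%:R.
Proof.
apply: functional_extensionality => k; rewrite F_eq0.
case: k => [m | m] /=; first by rewrite coef_Zpoly.
by case: existsP => // [[t]].
Qed.

(* Z is a product of three geometric series, so
   Z (1-X^pq)(1-X^qr)(1-X^rp) = (1-X^N)^3. *)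
Lemma Zpoly_prod : Zpoly = (\sum_(a < p) 'X^(q * r) ^+ a)
  * (\sum_(b < q) 'X^(r * p) ^+ b) * (\sum_(c < r) 'X^(p * q) ^+ c).
Proof.
rewrite big_distrlr /= pair_bigA big_distrlr /= pair_bigA /=.
apply: eq_bigr => [[[a b] c]] _ /=.
by rewrite -!exprM /lincomb !exprD /= !(mulnC a) !(mulnC b) !(mulnC c).
Qed.

Lemma Zpoly_identity :
  Zpoly * ((1 - 'X^(p * q)) * (1 - 'X^(q * r)) * (1 - 'X^(r * p))) = (1 - 'X^N) ^+ 3.
Proof.
have geo (s u : nat) :
    (s * u)%N = N -> (1 - 'X^u) * \sum_(i < s) 'X^u ^+ i = 1 - 'X^N :> {poly int}.
  by move=> <-; rewrite geometric_sum -exprM mulnC.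
have regroup (a b c u v w : {poly int}) :
  a * b * c * (u * v * w) = (v * a) * (w * b) * (u * c) by ring.
have eN1 : (q * r * p)%N = N by rewrite mulnC mulnA.
have eN2 : (r * p * q)%N = N by rewrite -mulnA mulnC.
by rewrite Zpoly_prod regroup !geo ?mulnA ?eN1 ?eN2 // -expr2 -exprSr.
Qed.

(* Combining with cyclotomic_identity and cancelling 1 - X^N. *)
Lemma master_identity :
  (1 - 'X^N) * ((1 - 'X^N) * ((1 - 'X^1) * 'Phi_N))
  = (1 - 'X^p) * ((1 - 'X^q) * ((1 - 'X^r) * Zpoly)).
Proof.
have nz : 1 - 'X^N != 0 :> {poly int}.
  have : (1 - 'X^N : {poly int})`_0 = 1.
    by rewrite coefB coef1 coefXn eqxx [(0 == N)%N]eq_sym eqn0Ngt N_gt0 subr0.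
  by move=> c0; apply/eqP => e; move: c0; rewrite e coef0 => /esym/eqP; rewrite oner_eq0.
have key (c z w n a b d : {poly int}) :
    z * w = n ^+ 3 -> c * w = n * (a * b * d) -> n * (n * (n * c)) = n * (a * (b * (d * z))).
  move=> zw cw; have -> : n * (n * (n * c)) = c * n ^+ 3 by ring.
  by rewrite -zw mulrA (mulrC c z) -mulrA cw; ring.
apply: (mulfI nz); apply: key; first exact: Zpoly_identity.
by rewrite expr1; apply: cyclotomic_identity.
Qed.

(* Coefficients of master_identity at n < N: a(n) - a(n-1) is the triple
   difference of the indicator of F_k = 0. *)
Lemma acoef_step n : (1 <= n)%N -> (n < N)%N ->
  acoef p q r n - acoef p q r n.-1 = bdiff3 p q r (fun k => (F p q r k == 0)%:R) n.
Proof.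
move=> n_ge1 n_lt; rewrite -coefz_Zpoly /bdiff3.
have := congr1 (coefz^~ n%:Z) master_identity; rewrite !coefz_mul1subXn => <-.
set g := bdiff 1 (coefz 'Phi_N).
have g0 : forall x, x < 0 -> g x = 0 by apply: bdiff_vanish => // x; apply: coefz_neg.
rewrite (bdiff_small (f := bdiff N g)) ?(bdiff_small (f := g)) ?ltz_nat //;
  last exact: bdiff_vanish.
by rewrite /g /bdiff /acoef -predn_int.
Qed.

End ThreePrimes.

(* Counting in lists of rationals taking values in {0,1,2}: the size is
   N_0 + N_1 + N_2 and the sum is N_1 + 2 N_2, so two such lists of equal
   size and sum have N_2 and -N_1/2 differing as N_0 does. *)
Lemma Ncount_sum d (s : seq rat) :
  (Ncount d s)%:R = \sum_(x <- s) (x == d%:R)%:R :> rat.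
Proof. by elim: s => [|x s IH]; rewrite ?big_nil ?big_cons //= natrD IH. Qed.

Lemma indicator012 (x : rat) : x \in [:: 0; 1; 2] ->
  (x == 0%:R)%:R + (x == 1%:R)%:R + (x == 2%:R)%:R = 1 :> rat /\
  (x == 1%:R)%:R + 2 * (x == 2%:R)%:R = x.
Proof. by rewrite !inE => /or3P [] /eqP ->. Qed.

Lemma count012 (s : seq rat) : all (mem [:: 0; 1; 2]) s ->
  (size s)%:R = (Ncount 0 s)%:R + (Ncount 1 s)%:R + (Ncount 2 s)%:R :> rat /\
  \sum_(x <- s) x = (Ncount 1 s)%:R + 2 * (Ncount 2 s)%:R.
Proof.
move=> /allP s012; rewrite !Ncount_sum -sum1_size natr_sum mulr_sumr -!big_split /=.
split; apply: eq_big_seq => x /s012 /indicator012 [] //.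
Qed.

Lemma balance012 (s1 s2 : seq rat) : all (mem [:: 0; 1; 2]) s1 -> all (mem [:: 0; 1; 2]) s2 ->
  size s1 = size s2 -> \sum_(x <- s1) x = \sum_(x <- s2) x ->
  (Ncount 2 s1)%:R - (Ncount 2 s2)%:R = (Ncount 0 s1)%:R - (Ncount 0 s2)%:R :> rat /\
  ((Ncount 1 s2)%:R - (Ncount 1 s1)%:R) / 2 = (Ncount 0 s1)%:R - (Ncount 0 s2)%:R :> rat.
Proof.
move=> /count012 [size1 sum1] /count012 [size2 sum2] /(congr1 (fun n => n%:R : rat)).
rewrite size1 size2 sum1 sum2 => e_size e_sum; split; lra.
Qed.

Unset Implicit Arguments.

(* The N_0 formula comes from acoef_step, and the sums of S_+ and S_- agree
   by bdiff3_F; balance012 then gives the N_1 and N_2 formulas. *)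
Theorem lemma6 (p q r n : nat) :
  prime p -> prime q -> prime r ->
  p != q -> q != r -> r != p ->
  (p < q)%N -> (p < r)%N ->
  (1 <= n)%N -> (n < p * q * r)%N ->
  let Fk := F p q r in
  let k : int := n%:Z in
  let Splus := [:: Fk k; Fk (k - p%:Z - q%:Z); Fk (k - q%:Z - r%:Z);
                   Fk (k - r%:Z - p%:Z)] in
  let Sminus := [:: Fk (k - p%:Z); Fk (k - q%:Z); Fk (k - r%:Z);
                    Fk (k - p%:Z - q%:Z - r%:Z)] in
  let D : rat := (acoef p q r n - acoef p q r n.-1)%:~R in
  [/\ D = ((Ncount 1 Sminus)%:R - (Ncount 1 Splus)%:R) / 2,
      D = (Ncount 0 Splus)%:R - (Ncount 0 Sminus)%:R
    & D = (Ncount 2 Splus)%:R - (Ncount 2 Sminus)%:R].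
Proof.
move=> p_pr q_pr r_pr neq_pq neq_qr neq_rp _ _ n_ge1 n_lt Fk k Splus Sminus D.
have -> : Splus = map Fk (plus_args p q r k) by [].
have -> : Sminus = map Fk (minus_args p q r k) by [].
have F012 x : - (p + q + r)%N%:Z < x -> x < (p * q * r)%N%:Z -> Fk x \in [:: 0; 1; 2].
  exact: F_range.
have plus012 : all (mem [:: 0; 1; 2]) (map Fk (plus_args p q r k)).
  by rewrite /= !F012 //; lia.
have minus012 : all (mem [:: 0; 1; 2]) (map Fk (minus_args p q r k)).
  by rewrite /= !F012 //; lia.
have sums : \sum_(x <- map Fk (plus_args p q r k)) x = \sum_(x <- map Fk (minus_args p q r k)) x.
  by apply/eqP; rewrite -subr_eq0 !big_map -bdiff3_expand bdiff3_F.
have [bal2 bal1] := balance012 plus012 minus012 erefl sums.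
have -> : D = (Ncount 0 (map Fk (plus_args p q r k)))%:R
            - (Ncount 0 (map Fk (minus_args p q r k)))%:R.
  rewrite /D acoef_step // bdiff3_expand rmorphB !rmorph_sum !Ncount_sum !big_map /=.
  by congr (_ - _); apply: eq_bigr => x _; case: (_ == _).
by split; rewrite ?bal1 ?bal2.
Qed.
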